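(* Let $X$ be a Banach space as described in the context. There exists a function $f\in X$ which is not a polynomial and for which there is a sequence $p_n\in\mathcal{P}_n[\mathbb{Z}]$ with $\lim_{n\to\infty}\|f-p_n\|=0$ if and only if $\liminf_{n\to\infty}\|z^n\|=0$.
   Context: $\mathbb{D}=\{z\in\mathbb{C}:|z|<1\}$. $X$ is a complex Banach space of functions analytic in $\mathbb{D}$ whose norm $\|\cdot\|$ satisfies: (i) $\|f(\cdot\, e^{it})\|=\|f(\cdot)\|$ for all $t\in\mathbb{R}$ and $f\in X$; (ii) $\|f\|<\infty$ for every entire function $f$; (iii) for all $f\in X$ and $g\in L[0,2\pi]$, $\big\|\frac{1}{2\pi}\int_0^{2\pi} f(ze^{it})g(t)\,dt\big\|\le \frac{1}{2\pi}\int_0^{2\pi}|g(t)|\,dt\cdot\|f\|$. $\|z^n\|$ is the norm in $X$ of $z\mapsto z^n$. A complex number is called an integer if its real and imaginary parts are integers; $\mathcal{P}_n[\mathbb{Z}]$ is the set of complex polynomials of degree at most $n-1$ with integer coefficients in this sense. *)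

From HB Require Import structures.
From mathcomp Require Import all_boot all_order all_algebra.
From mathcomp Require Import all_classical all_reals all_analysis.
From mathcomp Require Import complex.
Import Order.TTheory GRing.Theory Num.Theory.
Import numFieldNormedType.Exports.

Set Implicit Arguments.
Unset Strict Implicit.
Unset Printing Implicit Defensive.

Local Open Scope classical_set_scope.
Local Open Scope ring_scope.

Section Defs.
Variable R : realType.

Definition cabs (z : R[i]) : R := Normc.normc z.

Definition udisc : set R[i] := [set z | cabs z < 1].

(* f and g coincide on D (elements of X are functions on D) *)
Definition eq_on_disc (f g : R[i] -> R[i]) := forall z, udisc z -> f z = g z.

(* complex differentiability (holomorphy = analyticity) on a set U *)
Definition holo_on (U : set R[i]) (f : R[i] -> R[i]) :=
  forall z, U z -> derivable (f : R[i]^o -> R[i]^o) z 1.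

Definition entire (f : R[i] -> R[i]) := holo_on setT f.

Definition expi (t : R) : R[i] := Complex (cos t) (sin t).

Definition I02pi : set R := `[0, 2 * pi]%classic.

Definition L1_02pi (g : R -> R[i]) :=
  lebesgue_measure.-integrable I02pi (EFin \o (fun t => complex.Re (g t))) /\
  lebesgue_measure.-integrable I02pi (EFin \o (fun t => complex.Im (g t))).

Definition cint02pi (h : R -> R[i]) : R[i] :=
  Complex (Rintegral lebesgue_measure I02pi (fun t => complex.Re (h t)))
          (Rintegral lebesgue_measure I02pi (fun t => complex.Im (h t))).

Definition rot_conv (f : R[i] -> R[i]) (g : R -> R[i]) : R[i] -> R[i] :=
  fun z => Complex (2 * pi)^-1 0 * cint02pi (fun t => f (z * expi t) * g t).

Definition L1norm02pi (g : R -> R[i]) : R :=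
  (2 * pi)^-1 * Rintegral lebesgue_measure I02pi (fun t => cabs (g t)).

(* X (given by its carrier inX, a set of functions considered on D, and its
   norm nrm) is a complex Banach space of functions analytic in D *)
Record analytic_banach (inX : set (R[i] -> R[i])) (nrm : (R[i] -> R[i]) -> R)
  : Prop := {
  ab_local : forall f g, eq_on_disc f g -> inX f -> inX g /\ nrm g = nrm f;
  ab_holo : forall f, inX f -> holo_on udisc f;
  ab_zero : inX (fun _ => 0);
  ab_add : forall f g, inX f -> inX g -> inX (fun z => f z + g z);
  ab_scale : forall (c : R[i]) f, inX f -> inX (fun z => c * f z);
  ab_nrm_ge0 : forall f, inX f -> 0 <= nrm f;
  ab_nrm_eq0 : forall f, inX f -> nrm f = 0 -> eq_on_disc f (fun _ => 0);
  ab_nrm_scale : forall (c : R[i]) f, inX f -> nrm (fun z => c * f z) = cabs c * nrm f;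
  ab_nrm_triangle : forall f g, inX f -> inX g ->
      nrm (fun z => f z + g z) <= nrm f + nrm g;
  ab_complete : forall u : nat -> (R[i] -> R[i]), (forall n, inX (u n)) ->
      (forall e : R, 0 < e -> exists N, forall m n, (N <= m)%N -> (N <= n)%N ->
          nrm (fun z => u m z - u n z) < e) ->
      exists f, inX f /\ (fun n => nrm (fun z => u n z - f z)) @ \oo --> (0 : R)
}.

Definition rot_invariant (inX : set (R[i] -> R[i])) (nrm : (R[i] -> R[i]) -> R) :=
  forall (t : R) f, inX f ->
    inX (fun z => f (z * expi t)) /\ nrm (fun z => f (z * expi t)) = nrm f.

(* (ii) every entire function has finite norm, i.e. belongs to X *)
Definition has_entire (inX : set (R[i] -> R[i])) := forall f, entire f -> inX f.

Definition conv_bounded (inX : set (R[i] -> R[i])) (nrm : (R[i] -> R[i]) -> R) :=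
  forall f g, inX f -> L1_02pi g ->
    inX (rot_conv f g) /\ nrm (rot_conv f g) <= L1norm02pi g * nrm f.

Definition gauss_int (c : R[i]) := exists a b : int, c = Complex a%:~R b%:~R.

(* P_n[Z] : polynomials of degree at most n-1 with Gaussian-integer coefficients *)
Definition PnZ (n : nat) (p : {poly R[i]}) :=
  (size p <= n)%N /\ forall k, gauss_int p`_k.

Definition is_poly_on_disc (f : R[i] -> R[i]) :=
  exists q : {poly R[i]}, eq_on_disc f (fun z => q.[z]).

End Defs.

From HB Require Import structures.
From mathcomp Require Import all_boot all_order all_algebra.
From mathcomp Require Import all_classical all_reals all_analysis.
From mathcomp Require Import complex.
From mathcomp Require Import ring lra.
Import Order.TTheory GRing.Theory Num.Theory.
Import numFieldNormedType.Exports.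

Set Implicit Arguments.
Unset Strict Implicit.
Unset Printing Implicit Defensive.

Local Open Scope classical_set_scope.
Local Open Scope ring_scope.

(* Averaging [P (z w^j)] over the [N]-th roots of unity [w], with weights
   [w^(-kj)], isolates the monomial [P_k z^k]; rotation invariance and the
   triangle inequality then give [|P_k| ||z^k|| <= ||P||].  If [||z^n|| >= d > 0]
   for all [n], a Gaussian-integer polynomial of norm [< d] therefore vanishes,
   so Gaussian-integer approximants of [f] are eventually constant and [f] is a
   polynomial.  Conversely, if [liminf ||z^n|| = 0], pick [n_0 < n_1 < ...] with
   [||z^(n_j)|| <= 2^-j]: the lacunary series [sum_j z^(n_j)] converges in [X],
   its truncations lie in [P_n[Z]], and by the coefficient bound its sum is not
   a polynomial. *)

Section Modulus.
Variable R : realType.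
Implicit Types x y : R[i].

Lemma cabs0 : cabs (0 : R[i]) = 0.
Proof. exact: Normc.normc0. Qed.

Lemma cabsN1 : cabs (-1 : R[i]) = 1.
Proof. by rewrite /cabs (@normcN R) Normc.normc1. Qed.

Lemma cabsM x y : cabs (x * y) = cabs x * cabs y.
Proof. exact: Normc.normcM. Qed.

Lemma cabsV x : cabs x^-1 = (cabs x)^-1.
Proof. exact: Normc.normcV. Qed.

Lemma cabsX x n : cabs (x ^+ n) = cabs x ^+ n.
Proof.
elim: n => [|n IH]; first by rewrite !expr0 /cabs Normc.normc1.
by rewrite !exprS cabsM IH.
Qed.

Lemma cabs_nat n : cabs (n%:R : R[i]) = n%:R.
Proof. by rewrite /cabs (@normcMn R) Normc.normc1. Qed.

End Modulus.

Section Expi.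
Variable R : realType.

Lemma expi0 : expi (0 : R) = 1.
Proof. by rewrite /expi cos0 sin0. Qed.

Lemma expiD (a b : R) : expi (a + b) = expi a * expi b.
Proof. by rewrite /expi cosD sinD /=; congr Complex; ring. Qed.

Lemma expiX (t : R) n : expi t ^+ n = expi (n%:R * t).
Proof.
elim: n => [|n IH]; first by rewrite expr0 mul0r expi0.
by rewrite exprSr IH -expiD -natr1 mulrDl mul1r.
Qed.

Lemma cabs_expi (t : R) : cabs (expi t) = 1.
Proof. by rewrite /cabs /expi /= cos2Dsin2 sqrtr1. Qed.

Lemma expi2pi : expi (2 * pi : R) = 1.
Proof. by rewrite /expi mulr_natl cos2pi sin2pi. Qed.

Lemma expi2_neq1 (y : R) : 0 < y < pi -> expi (2 * y) != 1.
Proof.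
move=> /sin_gt0_pi sy_gt0; apply/negP => /eqP.
rewrite mulr_natl mulr2n expiD /expi /= => -[cos_yy _].
have := cos2Dsin2 y; move: cos_yy; rewrite !expr2 => ? ?.
have /eqP : sin y * sin y = 0 by lra.
by rewrite mulf_eq0 orbb => /eqP sy0; rewrite sy0 ltxx in sy_gt0.
Qed.

End Expi.

Section UnityRoot.
Variables (R : realType) (N : nat).
Hypothesis N_gt0 : (0 < N)%N.

Definition unity_rot : R[i] := expi (2 * pi / N%:R).

Let N_neq0 : N%:R != 0 :> R.
Proof. by rewrite pnatr_eq0 -lt0n. Qed.

Lemma cabs_unity_rotX m : cabs (unity_rot ^+ m) = 1.
Proof. by rewrite expiX cabs_expi. Qed.

Lemma unity_rot_prim : N.-primitive_root unity_rot.
Proof.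
have [m prim_m dvd_mN] : {m | m.-primitive_root unity_rot & (m %| N)%N}.
  by apply: prim_order_exists => //; rewrite expiX mulrC divfK // expi2pi.
suff -> : N = m by [].
apply/eqP; rewrite eqn_leq (dvdn_leq N_gt0 dvd_mN) andbT leqNgt.
apply/negP => lt_mN; move/eqP: (prim_expr_order prim_m); apply/negP.
rewrite expiX (_ : _ * _ = 2 * (m%:R * pi / N%:R)); last by ring.
apply: expi2_neq1; apply/andP; split.
  by rewrite divr_gt0 ?mulr_gt0 ?pi_gt0 ?ltr0n ?(prim_order_gt0 prim_m).
by rewrite ltr_pdivrMr ?ltr0n // mulrC ltr_pM2l ?pi_gt0 ?ltr_nat.
Qed.

Lemma unity_rot_neq0 : unity_rot != 0.
Proof. by rewrite (prim_root_eq0 unity_rot_prim) -lt0n. Qed.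

Lemma sum_unity_rotX l k : (l < N)%N -> (k < N)%N ->
  \sum_(j < N) (unity_rot ^+ l / unity_rot ^+ k) ^+ j =
    if l == k then N%:R else 0.
Proof.
move=> lN kN; have wk0 : unity_rot ^+ k != 0 by rewrite expf_neq0 ?unity_rot_neq0.
case: eqVneq => [->|neq_lk].
  by rewrite mulfV //; under eq_bigr do rewrite expr1n; rewrite sumr_const card_ord.
set x := _ / _; have xN1 : x ^+ N = 1.
  rewrite exprMn exprVn -!exprM !(mulnC _ N) !exprM.
  by rewrite (prim_expr_order unity_rot_prim) !expr1n invr1 mulr1.
have x_neq1 : x != 1.
  apply: contra neq_lk => /eqP /divr1_eq /eqP.
  by rewrite (eq_prim_root_expr unity_rot_prim) !modn_small.
have /eqP := subrX1 x N; rewrite xN1 subrr eq_sym mulf_eq0 subr_eq0 (negbTE x_neq1).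
by move/eqP.
Qed.

Lemma sum_unity_rot_horner (P : {poly R[i]}) k z :
  (size P <= N)%N -> (k < N)%N ->
  \sum_(j < N) (unity_rot ^+ k)^-1 ^+ j * P.[z * unity_rot ^+ j] =
    N%:R * (P`_k * z ^+ k).
Proof.
move=> PN kN.
under eq_bigr => j _ do rewrite (horner_coef_wide _ PN) mulr_sumr.
rewrite exchange_big /=.
transitivity (\sum_(l < N) P`_l * z ^+ l * (if l == k :> nat then N%:R else 0)).
  apply: eq_bigr => l _; rewrite -sum_unity_rotX // mulr_sumr.
  by apply: eq_bigr => j _; rewrite !exprMn -!exprM mulnC exprM; ring.
rewrite (bigD1 (Ordinal kN)) //= eqxx big1 ?addr0 => [|l /negPf neq_lk]; first by ring.
by rewrite -val_eqE /= in neq_lk; rewrite neq_lk mulr0.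
Qed.

End UnityRoot.

Section FunctionSpace.
Variable R : realType.
Variables (inX : set (R[i] -> R[i])) (nrm : (R[i] -> R[i]) -> R).
Hypothesis AB : analytic_banach inX nrm.

Lemma nrm0 : nrm (fun _ => 0) = 0.
Proof. by have := ab_nrm_scale AB 0 (ab_zero AB); rewrite cabs0 !mul0r. Qed.

Lemma inX_sub f g : inX f -> inX g -> inX (fun z => f z - g z).
Proof.
move=> fX gX; have := ab_add AB fX (ab_scale AB (-1) gX).
by under eq_fun do rewrite mulN1r.
Qed.

Lemma nrm_subC f g : inX f -> inX g ->
  nrm (fun z => f z - g z) = nrm (fun z => g z - f z).
Proof.
move=> fX gX; have := ab_nrm_scale AB (-1) (inX_sub gX fX).
by rewrite cabsN1 mul1r; under eq_fun do rewrite mulN1r opprB.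
Qed.

Lemma nrm_sub_le f g : inX f -> inX g ->
  nrm (fun z => f z - g z) <= nrm f + nrm g.
Proof.
move=> fX gX; have := ab_nrm_triangle AB fX (ab_scale AB (-1) gX).
by rewrite (ab_nrm_scale AB _ gX) cabsN1 mul1r; under eq_fun do rewrite mulN1r.
Qed.

Lemma inX_sum (I : Type) (s : seq I) (F : I -> R[i] -> R[i]) :
  (forall i, inX (F i)) -> inX (fun z => \sum_(i <- s) F i z).
Proof.
move=> FX; elim: s => [|i s IH].
  by under eq_fun do rewrite big_nil; exact: ab_zero AB.
by under eq_fun do rewrite big_cons; exact (ab_add AB (FX i) IH).
Qed.

Lemma nrm_sum_le (I : Type) (s : seq I) (F : I -> R[i] -> R[i]) :
  (forall i, inX (F i)) ->
  nrm (fun z => \sum_(i <- s) F i z) <= \sum_(i <- s) nrm (F i).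
Proof.
move=> FX; elim: s => [|i s IH].
  by under eq_fun do rewrite big_nil; rewrite nrm0 big_nil.
under eq_fun do rewrite big_cons; rewrite big_cons.
apply: le_trans (_ : _ <= nrm (F i) + nrm (fun z => \sum_(j <- s) F j z)) _.
  exact (ab_nrm_triangle AB (FX i) (inX_sum s FX)).
by rewrite lerD2l.
Qed.

Hypothesis ENT : has_entire inX.

Lemma inX_X n : inX (fun z => z ^+ n).
Proof. by apply: ENT => z _; exact: exprn_derivable. Qed.

Lemma inX_poly (P : {poly R[i]}) : inX (fun z => P.[z]).
Proof.
under eq_fun do rewrite horner_coef.
by apply: inX_sum => i; apply: ab_scale AB _ _ (inX_X _).
Qed.

Lemma nrmX_gt0 n : 0 < nrm (fun z => z ^+ n).
Proof.
rewrite lt_def (ab_nrm_ge0 AB (inX_X n)) andbT; apply/eqP => /(ab_nrm_eq0 AB (inX_X n)).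
have half_in_disc : udisc (2^-1 : R[i]).
  by rewrite /udisc /mkset cabsV (cabs_nat _ 2) invf_lt1 ?ltr0n ?ltr1n.
by move=> /(_ _ half_in_disc) /eqP; rewrite expf_eq0 invr_eq0 pnatr_eq0 andbF.
Qed.

Hypothesis ROT : rot_invariant inX nrm.

Lemma nrm_coef_le (P : {poly R[i]}) k :
  cabs P`_k * nrm (fun z => z ^+ k) <= nrm (fun z => P.[z]).
Proof.
set N := maxn (size P) k.+1; set w := unity_rot R N.
have PN : (size P <= N)%N := leq_maxl _ _.
have kN : (k < N)%N := leq_maxr _ _.
have N_gt0 : (0 < N)%N := leq_ltn_trans (leq0n k) kN.
have N_neq0 : N%:R != 0 :> R[i] by rewrite pnatr_eq0 -lt0n.
pose F j z := (w ^+ k)^-1 ^+ j * P.[z * w ^+ j].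
have rotP j : inX (fun z => P.[z * w ^+ j]) /\
    nrm (fun z => P.[z * w ^+ j]) = nrm (fun z => P.[z]).
  by rewrite /w /unity_rot expiX; exact: ROT (inX_poly P).
have FX j : inX (F j) by apply: ab_scale AB _ _ (rotP j).1.
have nrmF j : nrm (F j) = nrm (fun z => P.[z]).
  rewrite (ab_nrm_scale AB _ (rotP j).1) (rotP j).2.
  by rewrite cabsX cabsV cabs_unity_rotX // invr1 expr1n mul1r.
have avgE : (fun z => N%:R^-1 * \sum_(j < N) F j z) = (fun z => P`_k * z ^+ k).
  by apply/funext => z; rewrite sum_unity_rot_horner // mulKf.
have := ab_nrm_scale AB N%:R^-1 (inX_sum (index_enum 'I_N) FX).
rewrite avgE (ab_nrm_scale AB _ (inX_X k)) => ->.
rewrite cabsV cabs_nat ler_pdivrMl ?ltr0n //.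
apply: le_trans (_ : _ <= \sum_(j < N) nrm (F j)) _.
  exact: nrm_sum_le.
by under eq_bigr do rewrite nrmF; rewrite sumr_const card_ord mulr_natl.
Qed.

End FunctionSpace.

Section GaussInt.
Variable R : realType.
Implicit Types a b : R[i].

Lemma gauss0 : gauss_int (0 : R[i]).
Proof. by exists 0, 0. Qed.

Lemma gaussD a b : gauss_int a -> gauss_int b -> gauss_int (a + b).
Proof. by move=> [x [y ->]] [u [v ->]]; exists (x + u), (y + v); rewrite !rmorphD. Qed.

Lemma gaussB a b : gauss_int a -> gauss_int b -> gauss_int (a - b).
Proof. by move=> [x [y ->]] [u [v ->]]; exists (x - u), (y - v); rewrite !rmorphB. Qed.

Lemma gauss_nat n : gauss_int (n%:R : R[i]).
Proof. by exists n, 0; rewrite -(rmorph_nat (real_complex R)). Qed.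

Lemma gauss_lt1_eq0 a : gauss_int a -> cabs a < 1 -> a = 0.
Proof.
have int_eq0 (x : int) : (x%:~R : R) ^+ 2 < 1 -> x = 0.
  rewrite -(rmorphXn intr) ltrz1 => x2_lt1; apply/eqP.
  by rewrite -sqrf_eq0 eq_le sqr_ge0 andbT -ltzD1 add0r.
move=> [x [y ->]]; rewrite /cabs /= => norm_lt1.
have xy_lt1 : (x%:~R : R) ^+ 2 + (y%:~R : R) ^+ 2 < 1.
  by move: norm_lt1; rewrite -[X in _ < X]sqrtr1 ltr_sqrt ?ltr01.
have x0 : x = 0 by apply: (int_eq0 _ (le_lt_trans _ xy_lt1)); rewrite lerDl sqr_ge0.
have y0 : y = 0 by apply: (int_eq0 _ (le_lt_trans _ xy_lt1)); rewrite lerDr sqr_ge0.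
by rewrite x0 y0.
Qed.

End GaussInt.

Section RealSequences.
Variable R : realType.
Implicit Type u : nat -> R.

Lemma cvg0_lt_eventually u : u @ \oo --> 0 ->
  forall e, 0 < e -> exists N, forall n, (N <= n)%N -> u n < e.
Proof.
move=> /cvgrPdist_lt u0 e e_gt0; have [N _ uN] := u0 e e_gt0.
by exists N => n /uN; rewrite sub0r normrN; apply: le_lt_trans (ler_norm _).
Qed.

Lemma lt_eventually_cvg0 u : (forall n, 0 <= u n) ->
  (forall e, 0 < e -> exists N, forall n, (N <= n)%N -> u n < e) -> u @ \oo --> 0.
Proof.
move=> u_ge0 u_lt; apply/cvgrPdist_lt => e e_gt0; have [N uN] := u_lt e e_gt0.
by exists N => // n /uN; rewrite sub0r normrN ger0_norm.
Qed.

Lemma limn_einf_eq0P u : (forall n, 0 <= u n) ->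
  limn_einf (fun n => (u n)%:E) = 0%E <->
  (forall e, 0 < e -> forall K, exists2 k, (K <= k)%N & u k < e).
Proof.
move=> u_ge0; set v := fun n => (u n)%:E.
have -> : limn_einf v = ereal_sup (range (einfs v)).
  by rewrite limn_einf_lim; apply: cvg_lim => //; exact: cvg_einfs_sup.
split => [sup0 e e_gt0 K | small].
  have : (einfs v K < e%:E)%E.
    by apply: le_lt_trans (_ : _ <= 0)%E _; rewrite ?lte_fin // -sup0 ereal_sup_ubound //; exists K.
  by move=> /ereal_inf_lt [_ [k /= Kk <-]]; rewrite lte_fin; exists k.
have einfs0 K : einfs v K = 0%E.
  apply/le_anti/andP; split; last by apply: le_ereal_inf_tmp => _ [k _ <-]; rewrite lee_fin.
  apply/lee_addgt0Pr => e e_gt0; have [k Kk uk] := small e e_gt0 K.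
  rewrite add0e; apply: le_trans (_ : _ <= v k)%E _; last by rewrite lee_fin; exact: ltW.
  by apply: ereal_inf_lbound; exists k.
rewrite (_ : range _ = [set 0%E]) ?ereal_sup1 //.
by apply/seteqP; split => [_ [K _ <-]|_ ->]; rewrite /= ?einfs0 //; exists 0%N; rewrite ?einfs0.
Qed.

Lemma lbound_of_not_frequently_small u : (forall k, 0 < u k) ->
  ~ (forall e, 0 < e -> forall K, exists2 k, (K <= k)%N & u k < e) ->
  exists2 d, 0 < d & forall k, d <= u k.
Proof.
move=> u_gt0 /existsNP [e /not_implyP [e_gt0 /existsNP [K u_ge]]].
exists (\big[Order.min/e]_(k < K) u k).
  by apply/bigmin_gtP; split=> // i _; exact: u_gt0.
move=> k; case: (ltnP k K) => [kK|Kk]; first exact: (bigmin_le _ (Ordinal kK)).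
apply: (@le_trans _ _ e); first exact: bigmin_le_id.
rewrite leNgt; apply/negP => uk.
by apply: u_ge; exists k.
Qed.

Lemma frequently_small_subseq u :
  (forall e, 0 < e -> forall K, exists2 k, (K <= k)%N & u k < e) ->
  exists2 ns : nat -> nat, (forall j, (ns j < ns j.+1)%N) &
    forall j, u (ns j) <= 2^-1 ^+ j.
Proof.
move=> small; have half_gt0 : (0 : R) < 2^-1 by rewrite invr_gt0 ltr0n.
have [h hP] : {h : nat -> nat & forall K, (K <= h K)%N /\ u (h K) < 2^-1 ^+ K}.
  apply: (@choice _ _ (fun K k => (K <= k)%N /\ u k < 2^-1 ^+ K)) => K.
  by have [k] := small _ (exprn_gt0 K half_gt0) K; exists k.
pose fix ns j := if j is j'.+1 then h (ns j').+1 else h 0.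
have ns_incr j : (ns j < ns j.+1)%N by exact: (hP _).1.
have ns_ge j : (j <= ns j)%N by elim: j => // j IH; apply: leq_ltn_trans IH (ns_incr j).
exists ns => // -[|j]; first exact/ltW/(hP 0%N).2.
apply: le_trans (ltW (hP _).2) _.
apply: ler_wiXn2l; [exact: ltW | rewrite invf_le1 ?ler1n // | exact: ns_ge].
Qed.

Lemma sum_half_powers_le k m : \sum_(k <= j < m) (2^-1 : R) ^+ j <= 2 * 2^-1 ^+ k.
Proof.
have half_gt0 : (0 : R) < 2^-1 by rewrite invr_gt0 ltr0n.
have [km|mk] := leqP k m; last first.
  by rewrite big_geq ?(ltnW mk) // mulr_ge0 // exprn_ge0 //; exact: ltW.
rewrite -(subnKC km) geometric_partial_tail.
apply: le_trans (geometric_le_lim _ _ half_gt0 _) _.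
- exact/exprn_ge0/ltW.
- by rewrite gtr0_norm // invf_lt1 ?ltr0n ?ltr1n.
by rewrite (_ : 1 - 2^-1 = 2^-1 :> R) ?invrK 1?mulrC //; lra.
Qed.

Lemma cvg_twice_half_powers : (fun n => 2 * 2^-1 ^+ n : R) @ \oo --> 0.
Proof.
by apply: (cvg_geometric 2); rewrite gtr0_norm ?invr_gt0 // invf_lt1 ?ltr0n ?ltr1n.
Qed.

End RealSequences.

Section GaussianApproximation.
Variable R : realType.
Variables (inX : set (R[i] -> R[i])) (nrm : (R[i] -> R[i]) -> R).
Hypotheses (AB : analytic_banach inX nrm) (ENT : has_entire inX)
  (ROT : rot_invariant inX nrm).
Variable d : R.
Hypotheses (d_gt0 : 0 < d) (nrmX_ge : forall k, d <= nrm (fun z => z ^+ k)).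

Lemma gauss_poly_small_eq0 (Q : {poly R[i]}) :
  (forall k, gauss_int Q`_k) -> nrm (fun z => Q.[z]) < d -> Q = 0.
Proof.
move=> QZ Q_lt_d; apply/polyP => k; rewrite coef0; apply: gauss_lt1_eq0 => //.
rewrite ltNge; apply/negP => Qk_ge1; move: Q_lt_d; rewrite ltNge => /negP; apply.
apply: le_trans (nrmX_ge k) (le_trans _ (nrm_coef_le AB ENT ROT Q k)).
by rewrite ler_peMl // ltW // (nrmX_gt0 AB ENT).
Qed.

(* Two approximants at distance [< d] coincide, so [p] is eventually constant. *)
Lemma gauss_limit_is_poly f (p : nat -> {poly R[i]}) : inX f ->
  (forall n k, gauss_int (p n)`_k) ->
  (fun n => nrm (fun z => f z - (p n).[z])) @ \oo --> 0 -> is_poly_on_disc f.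
Proof.
move=> fX pZ lim_p; have fpX n := inX_sub AB fX (inX_poly AB ENT (p n)).
have [N pN] := cvg0_lt_eventually lim_p (divr_gt0 d_gt0 (ltr0n _ 2)).
have p_const n : (N <= n)%N -> p n = p N.
  move=> Nn; apply/eqP; rewrite -subr_eq0; apply/eqP/gauss_poly_small_eq0.
    by move=> k; rewrite coefB; apply: gaussB.
  have -> : (fun z => (p n - p N).[z]) =
      (fun z => (f z - (p N).[z]) - (f z - (p n).[z])).
    by apply/funext => z; rewrite hornerD hornerN; ring.
  apply: le_lt_trans (nrm_sub_le AB (fpX N) (fpX n)) _.
  by have := pN N (leqnn N); have := pN n Nn; lra.
have /(ab_nrm_eq0 AB (fpX N)) f_pN : nrm (fun z => f z - (p N).[z]) = 0.
  apply/le_anti; rewrite (ab_nrm_ge0 AB (fpX N)) andbT.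
  apply/ler_addgt0Pr => e e_gt0; have [M pM] := cvg0_lt_eventually lim_p e_gt0.
  by rewrite add0r -(p_const (maxn N M)) ?leq_maxl // ltW // pM // leq_maxr.
by exists (p N) => z /f_pN /eqP; rewrite subr_eq0 => /eqP.
Qed.

End GaussianApproximation.

Section Lacunary.
Variable R : realType.
Variables (inX : set (R[i] -> R[i])) (nrm : (R[i] -> R[i]) -> R).
Hypotheses (AB : analytic_banach inX nrm) (ENT : has_entire inX)
  (ROT : rot_invariant inX nrm).
Variable ns : nat -> nat.
Hypotheses (ns_incr : forall j, (ns j < ns j.+1)%N)
  (nrm_ns : forall j, nrm (fun z => z ^+ ns j) <= 2^-1 ^+ j).

Definition lacunary_poly k : {poly R[i]} := \sum_(j < k) 'X^(ns j).

Let ns_mono : {homo ns : i j / (i < j)%N} := homo_ltn ltn_trans ns_incr.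

Let ns_ge j : (j <= ns j)%N.
Proof. by elim: j => // j IH; apply: leq_ltn_trans IH (ns_incr j). Qed.

Let lacX k : inX (fun z => (lacunary_poly k).[z]) := inX_poly AB ENT _.

Lemma nrm_lacunary_sub_le k m : (k <= m)%N ->
  nrm (fun z => (lacunary_poly m - lacunary_poly k).[z]) <= 2 * 2^-1 ^+ k.
Proof.
move=> km; apply: le_trans (sum_half_powers_le _ k m).
have -> : lacunary_poly m - lacunary_poly k = \sum_(k <= j < m) 'X^(ns j).
  rewrite /lacunary_poly -!(big_mkord xpredT (fun j => 'X^(ns j))).
  by rewrite (big_cat_nat (leq0n k) km) /= addrAC subrr add0r.
under eq_fun do rewrite horner_sum; under eq_fun do under eq_bigr do rewrite hornerXn.
apply: le_trans (_ : _ <= \sum_(k <= j < m) nrm (fun z => z ^+ ns j)) _.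
  exact (nrm_sum_le AB (index_iota k m) (fun j => inX_X ENT (ns j))).
by apply: ler_sum => j _; exact: nrm_ns.
Qed.

Lemma lacunary_cvg : exists f, inX f /\
  (fun n => nrm (fun z => (lacunary_poly n).[z] - f z)) @ \oo --> 0.
Proof.
apply: (ab_complete AB (u := fun n z => (lacunary_poly n).[z])) => // e e_gt0.
have [N small] := cvg0_lt_eventually (@cvg_twice_half_powers R) e_gt0.
suff le_case m n : (N <= n)%N -> (n <= m)%N ->
    nrm (fun z => (lacunary_poly m).[z] - (lacunary_poly n).[z]) < e.
  exists N => m n Nm Nn; have [nm|/ltnW mn] := leqP n m; first exact: le_case.
  by rewrite (nrm_subC AB (lacX m) (lacX n)); exact: le_case.
move=> Nn nm; apply: le_lt_trans (small n Nn).
by under eq_fun do rewrite -hornerN -hornerD; exact: nrm_lacunary_sub_le.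
Qed.

Lemma coef_lacunary_poly k j : (j < k)%N -> (lacunary_poly k)`_(ns j) = 1.
Proof.
move=> jk; rewrite /lacunary_poly coef_sum (bigD1 (Ordinal jk)) //= coefXn eqxx.
rewrite big1 ?addr0 // => i neq_ij.
by rewrite coefXn (inj_eq (incn_inj (leq_mono ns_mono))) -[j]/(val (Ordinal jk)) val_eqE eq_sym (negbTE neq_ij).
Qed.

Lemma lacunary_limit_not_poly f : inX f ->
  (fun n => nrm (fun z => (lacunary_poly n).[z] - f z)) @ \oo --> 0 ->
  ~ is_poly_on_disc f.
Proof.
move=> fX lim_f [q f_q]; set m := ns (size q).
have nrmX_le k : (size q < k)%N ->
    nrm (fun z => z ^+ m) <= nrm (fun z => (lacunary_poly k).[z] - f z).
  move=> qk; have := nrm_coef_le AB ENT ROT (lacunary_poly k - q) m.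
  rewrite coefB coef_lacunary_poly // nth_default ?ns_ge // subr0.
  rewrite /cabs Normc.normc1 mul1r.
  have lac_q : eq_on_disc (fun z => (lacunary_poly k).[z] - f z)
      (fun z => (lacunary_poly k - q).[z]).
    by move=> z /f_q ->; rewrite hornerD hornerN.
  by rewrite (ab_local AB lac_q (inX_sub AB (lacX k) fX)).2.
have : nrm (fun z => z ^+ m) <= 0.
  apply/ler_addgt0Pr => e e_gt0; have [M lim_M] := cvg0_lt_eventually lim_f e_gt0.
  rewrite add0r; apply: le_trans (nrmX_le (maxn M (size q).+1) _) (ltW (lim_M _ _)).
    by rewrite leq_max ltnSn orbT.
  exact: leq_maxl.
by rewrite leNgt (nrmX_gt0 AB ENT).
Qed.

Lemma PnZ_lacunary_poly n k : (forall j, (j < k)%N -> (ns j < n)%N) ->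
  PnZ n (lacunary_poly k).
Proof.
move=> ns_lt; split => [|i].
  apply: (big_ind (fun q : {poly R[i]} => (size q <= n)%N)) => [|p q|j _].
  - by rewrite size_poly0.
  - by move=> p_n q_n; rewrite (leq_trans (size_polyD p q)) // geq_max p_n q_n.
  - by rewrite size_polyXn ns_lt.
rewrite coef_sum; apply: (big_ind (@gauss_int R)) => [|a b|j _].
- exact: gauss0.
- exact: gaussD.
- by rewrite coefXn; exact: gauss_nat.
Qed.

Lemma lacunary_approx f : inX f ->
  (fun n => nrm (fun z => (lacunary_poly n).[z] - f z)) @ \oo --> 0 ->
  exists p : nat -> {poly R[i]}, (forall n, PnZ n (p n)) /\
    (fun n => nrm (fun z => f z - (p n).[z])) @ \oo --> 0.
Proof.
move=> fX lim_f.
have ns_unbounded n : exists j, (n <= ns j)%N by exists n.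
(* [m n] is the first index with [n <= ns (m n)], so [lacunary_poly (m n)]
   is the truncation of the series below degree [n]. *)
pose m n := ex_minn (ns_unbounded n).
have ns_lt j n : (j < m n)%N -> (ns j < n)%N.
  by rewrite /m; case: ex_minnP => i _ min_i; apply: contraTT; rewrite -!leqNgt; exact: min_i.
have lt_m K n : (ns K < n)%N -> (K < m n)%N.
  rewrite /m; case: ex_minnP => i n_le _ nsK_lt; rewrite ltnNge -(leq_mono ns_mono).
  by apply/negP => /(leq_trans n_le); rewrite leqNgt nsK_lt.
exists (fun n => lacunary_poly (m n)); split => [n|]; first by apply: PnZ_lacunary_poly => j /ns_lt.
apply: lt_eventually_cvg0 => [n|e e_gt0].
  exact (ab_nrm_ge0 AB (inX_sub AB fX (lacX _))).
have [M lim_M] := cvg0_lt_eventually lim_f e_gt0.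
by exists (ns M).+1 => n /lt_m/ltnW/lim_M; rewrite (nrm_subC AB fX (lacX _)).
Qed.

End Lacunary.

Theorem theorem5p5 (R : realType) (inX : set (R[i] -> R[i]))
    (nrm : (R[i] -> R[i]) -> R) :
  analytic_banach inX nrm ->
  rot_invariant inX nrm ->
  has_entire inX ->
  conv_bounded inX nrm ->
  ((exists f, inX f /\ ~ is_poly_on_disc f /\
      exists p : nat -> {poly R[i]}, (forall n, PnZ n (p n)) /\
        (fun n => nrm (fun z => f z - (p n).[z])) @ \oo --> (0 : R))
   <-> limn_einf (fun n => (nrm (fun z => z ^+ n))%:E) = 0%E).
Proof.
move=> AB ROT ENT _; have nrmX_gt0 := nrmX_gt0 AB ENT.
rewrite limn_einf_eq0P => [|n]; last exact/ltW.
split=> [[f [fX [f_not_poly [p [pZ lim_p]]]]] | /frequently_small_subseq[ns ns_incr nrm_ns]].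
  apply: contrapT => /(lbound_of_not_frequently_small nrmX_gt0) [d d_gt0 nrmX_ge].
  apply/f_not_poly/(gauss_limit_is_poly AB ENT ROT d_gt0 nrmX_ge fX _ lim_p).
  by move=> n; case: (pZ n).
have [f [fX lim_f]] := lacunary_cvg AB ENT nrm_ns.
exists f; split=> //; split; first exact (lacunary_limit_not_poly AB ENT ROT ns_incr fX lim_f).
exact (lacunary_approx AB ENT ns_incr fX lim_f).
Qed.
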